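(* Let $q=2^n$, let $B$ be a $k$-subset of $\mathrm{GF}(q)$ with $k\ge3$, and let $\mathcal B=\mathrm{GA}_1(q)(B)$. Let $E$ be a subset of $\mathrm{GF}(q)$ such that $\hat f_B(\mu)=\hat f_E(\mu^d)$ for all $\mu\in\mathrm{GF}(q)$, where $\gcd(d,q-1)=1$. Then the following are equivalent: (1) $(\mathrm{GF}(q),\mathcal B)$ is a $3$-design; (2) $\sum_{x,y\in\mathrm{GF}(q)}(-1)^{f_E(x)+f_E(y)+f_E(u^dx+(1+u)^dy)}$ is independent of $u\in\mathrm{GF}(q)\setminus\mathrm{GF}(2)$; (3) $\sum_{\alpha\in\mathrm{GF}(q)}\hat f_E(\alpha)\hat f_E(u^d\alpha)\hat f_E((1+u)^d\alpha)$ is independent of $u\in\mathrm{GF}(q)\setminus\mathrm{GF}(2)$; (4) $N_E(u^d,(1+u)^d,1)$ is independent of $u\in\mathrm{GF}(q)\setminus\mathrm{GF}(2)$.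
   Context: $\mathrm{Tr}$ is the absolute trace $\mathrm{GF}(2^n)\to\mathrm{GF}(2)$. For $S\subseteq\mathrm{GF}(q)$, $f_S$ is its characteristic function as a Boolean function, and $\hat f(\mu)=\sum_{x\in\mathrm{GF}(2^n)}(-1)^{f(x)+\mathrm{Tr}(\mu x)}$ is the Walsh transform. $N_S(a,b,c)$ is the number of triples $(x,y,z)\in S^3$ with $ax+by+cz=0$. $\mathrm{GA}_1(q)$ is the group of permutations $x\mapsto ax+b$ of $\mathrm{GF}(q)$ with $a\ne0$; $\mathrm{GA}_1(q)(B)=\{\pi(B):\pi\in\mathrm{GA}_1(q)\}$. A pair $(\mathcal P,\mathcal B)$ with $\mathcal B$ a set of $k$-subsets of $\mathcal P$ is a $3$-design if every $3$-subset of $\mathcal P$ lies in exactly $\lambda$ members of $\mathcal B$ for some constant $\lambda$. *)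

(* GF(2^n) is modelled as an arbitrary finite field F with #|F| = 2^n. *)
From mathcomp Require Import all_boot all_order all_algebra all_field.
Set Implicit Arguments. Unset Strict Implicit. Unset Printing Implicit Defensive.
Import GRing.Theory.
Local Open Scope ring_scope.

Section Defs.
Variable F : finFieldType.

(* absolute trace GF(2^n) -> GF(2), valued in F (it lies in {0,1}) *)
Definition Tr (n : nat) (x : F) : F := \sum_(i < n) x ^+ (2 ^ i).

Definition chiTr (n : nat) (x : F) : int := if Tr n x == 0 then 1 else -1.

Definition sgnS (S : {set F}) (x : F) : int := if x \in S then -1 else 1.

Definition walsh (n : nat) (S : {set F}) (mu : F) : int :=
  \sum_(x : F) sgnS S x * chiTr n (mu * x).

Definition NS (S : {set F}) (a b c : F) : nat :=
  #|[set t : F * F * F | [&& t.1.1 \in S, t.1.2 \in S, t.2 \in S &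
                           a * t.1.1 + b * t.1.2 + c * t.2 == 0]]|.

Definition GA1orbit (B : {set F}) : {set {set F}} :=
  [set [set p.1 * x + p.2 | x in B] | p in [set p : F * F | p.1 != 0]].

Definition is_3design (Bs : {set {set F}}) : Prop :=
  exists lambda : nat, forall T : {set F}, #|T| = 3%N ->
    #|[set Bl in Bs | T \subset Bl]| = lambda.

Definition indep_u {T : Type} (g : F -> T) : Prop :=
  forall u v : F, u != 0 -> u != 1 -> v != 0 -> v != 1 -> g u = g v.

End Defs.

(* The Walsh transform turns the triple correlation
   sum_al W_S(al) W_S(a al) W_S(b al) into 2^n times the sign sum
   P_S(a, b) = sum_{x,y} (-1)^(f_S(x) + f_S(y) + f_S(a x + b y)), because the additive
   characters (-1)^Tr(al z) sum to zero unless z = 0.  Substituting al = mu^d, the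
   hypothesis W_B(mu) = W_E(mu^d) gives P_E(u^d, (1+u)^d) = P_B(u, 1+u).  Writing
   (-1)^f_S = 1 - 2 f_S, a sign sum with a, b <> 0 equals q^2 - 6qk + 12k^2 - 8N, where N
   counts the pairs (x, y) in S^2 with a x + b y in S, which in characteristic 2 is
   N_S(a, b, 1).  Finally GA_1(q) is sharply 2-transitive, so up to the size of the
   stabiliser of B, the number of blocks through distinct t1, t2, t3 is the number of
   pairs of distinct x, y in B with c x + (1 - c) y in B, where t3 = c t1 + (1 - c) t2;
   for c = u this count plus k is N_B(u, 1+u, 1). *)

From mathcomp Require Import all_boot all_order all_algebra all_field.
From mathcomp Require Import ring.

Set Implicit Arguments.
Unset Strict Implicit.
Unset Printing Implicit Defensive.

Import GRing.Theory.
Local Open Scope ring_scope.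

Lemma poly_has_nonroot {F : finFieldType} {p : {poly F}} :
  p != 0 -> (size p <= #|F|)%N -> exists x, ~~ root p x.
Proof.
move=> p_neq0 size_p; apply/existsP; rewrite -negb_forall.
apply: contraL size_p => /forallP rootp; rewrite -ltnNge cardE.
by apply: max_poly_roots p_neq0 _ (enum_uniq _); apply/allP => x _; apply: rootp.
Qed.

Section Trace.
Variables (F : finFieldType) (n : nat).
Hypothesis hchar : 2%N \in [pchar F].
Hypothesis hcard : #|F| = (2 ^ n)%N.

Lemma card_exp_gt0 : (0 < n)%N.
Proof.
have : (1 < #|F|)%N by rewrite (cardD1 0) (cardD1 1) !inE oner_neq0.
by rewrite hcard; case: (n).
Qed.

Lemma exprD_pow2 (x y : F) i : (x + y) ^+ (2 ^ i) = x ^+ (2 ^ i) + y ^+ (2 ^ i).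
Proof.
apply: exprDn_pchar; rewrite pnatX; apply/orP; left.
by rewrite /pnat (primes_prime (isT : prime 2)) /= hchar.
Qed.

Lemma TrD (x y : F) : Tr n (x + y) = Tr n x + Tr n y.
Proof. by rewrite /Tr -big_split /=; apply: eq_bigr => i _; rewrite exprD_pow2. Qed.

Lemma Tr0 : Tr n (0 : F) = 0.
Proof. by rewrite /Tr big1 // => i _; rewrite expr0n expn_eq0. Qed.

Lemma Tr_sqr (x : F) : Tr n x ^+ 2 = Tr n x.
Proof.
rewrite -(pFrobenius_autE hchar) rmorph_sum /=.
rewrite (eq_bigr (fun i : 'I_n => x ^+ (2 ^ i.+1))) => [|i _]; last by rewrite expnSr exprM.
case: n hcard => [|m] cardF; first by rewrite /Tr !big_ord0.
rewrite big_ord_recr /= -cardF expf_card /Tr big_ord_recl /= addrC.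
by congr (_ + _); apply: eq_bigr => i _.
Qed.

Lemma Tr_01 (x : F) : Tr n x = 0 \/ Tr n x = 1.
Proof.
have : Tr n x * (Tr n x - 1) = 0 by rewrite mulrBr mulr1 -expr2 Tr_sqr subrr.
by move/eqP; rewrite mulf_eq0 subr_eq0 => /orP [] /eqP; [left | right].
Qed.

Lemma chiTrD (x y : F) : chiTr n (x + y) = chiTr n x * chiTr n y.
Proof.
rewrite /chiTr TrD.
have two0 : 1 + 1 = 0 :> F by rewrite -(natrD F 1 1) (eqP hchar).
by case: (Tr_01 x) => ->; case: (Tr_01 y) => ->;
  rewrite ?addr0 ?add0r ?two0 ?eqxx ?oner_eq0 ?mulr1 ?mul1r ?mulrNN.
Qed.

Definition Tr_poly : {poly F} := \sum_(i < n) 'X^(2 ^ i).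

Lemma size_Tr_poly : size Tr_poly = (2 ^ n.-1).+1.
Proof.
rewrite /Tr_poly; case: n card_exp_gt0 => // m _.
rewrite big_ord_recr /= addrC size_polyDl size_polyXn //.
apply: leq_ltn_trans (size_sum _ _ _) _; rewrite ltnS.
by apply/bigmax_leqP => i _; rewrite size_polyXn ltn_exp2l.
Qed.

Lemma Tr_nontrivial : exists x : F, Tr n x != 0.
Proof.
have Tr_poly_neq0 : Tr_poly != 0 by rewrite -size_poly_eq0 size_Tr_poly.
have size_le : (size Tr_poly <= #|F|)%N.
  rewrite size_Tr_poly hcard; case: n card_exp_gt0 => // m _.
  by rewrite expnS mul2n -addnn -addn1 leq_add2l expn_gt0.
have [x] := poly_has_nonroot Tr_poly_neq0 size_le.
by rewrite /root /Tr_poly horner_sum; under eq_bigr do rewrite hornerXn; exists x.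
Qed.

Lemma sum_chiTr : \sum_(x : F) chiTr n x = 0.
Proof.
have [b Trb] := Tr_nontrivial.
have sumN : \sum_(x : F) chiTr n x = - \sum_(x : F) chiTr n x.
  rewrite {1}(reindex_inj (addIr b)) /= -sumrN; apply: eq_bigr => x _.
  by rewrite chiTrD /chiTr (negbTE Trb) mulrN1.
have : (\sum_(x : F) chiTr n x) *+ 2 == 0 by rewrite mulr2n {1}sumN addNr.
by rewrite Num.Theory.mulrn_eq0 => /eqP.
Qed.

Lemma sum_chiTr_mul (z : F) :
  \sum_(a : F) chiTr n (a * z) = ((z == 0) * 2 ^ n)%:R.
Proof.
have [->|z_neq0] := eqVneq z 0.
  under eq_bigr do rewrite mulr0 /chiTr Tr0 eqxx.
  by rewrite sumr_const mul1n -hcard.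
by have := sum_chiTr; rewrite (reindex_inj (mulIf z_neq0)) => ->.
Qed.

End Trace.

Lemma mulr_sum3 (R : pzSemiRingType) (I : finType) (A B C : I -> R) :
  (\sum_i A i) * (\sum_j B j) * (\sum_k C k) =
  \sum_j \sum_k \sum_i A i * B j * C k.
Proof.
symmetry; under eq_bigr do under eq_bigr do rewrite -!mulr_suml.
by under eq_bigr do rewrite -mulr_sumr; rewrite -mulr_suml -mulr_sumr.
Qed.

Definition sgn_sum (F : finFieldType) (S : {set F}) (a b : F) : int :=
  \sum_(x : F) \sum_(y : F) sgnS S x * sgnS S y * sgnS S (a * x + b * y).

Section WalshTripleProduct.
Variables (F : finFieldType) (n : nat).
Hypothesis hchar : 2%N \in [pchar F].
Hypothesis hcard : #|F| = (2 ^ n)%N.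

Lemma sum_chiTr_delta (G : F -> int) (w : F) :
  \sum_(z : F) G z * \sum_(al : F) chiTr n (al * (z + w)) = (2 ^ n)%:R * G w.
Proof.
under eq_bigr do rewrite (sum_chiTr_mul hchar hcard) addr_eq0 (oppr_pchar2 hchar).
rewrite (bigD1 w) //= big1 ?addr0 => [|z /negbTE ->]; last by rewrite mulr0.
by rewrite eqxx mulrC mul1n.
Qed.

Lemma walsh_triple_product (S : {set F}) (a b : F) :
  \sum_(al : F) walsh n S al * walsh n S (a * al) * walsh n S (b * al) =
  (2 ^ n)%:R * sgn_sum S a b.
Proof.
rewrite /walsh /sgn_sum; under eq_bigr do rewrite mulr_sum3.
rewrite exchange_big mulr_sumr; apply: eq_bigr => x _.
rewrite exchange_big mulr_sumr; apply: eq_bigr => y _.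
rewrite exchange_big /= -(sum_chiTr_delta (fun z => sgnS S x * sgnS S y * sgnS S z)).
apply: eq_bigr => z _; rewrite mulr_sumr.
apply: eq_bigr => al _; rewrite !mulrDr !(chiTrD hchar hcard) !mulrA.
by rewrite [al * a]mulrC [al * b]mulrC; ring.
Qed.

Lemma sgn_sum_expf (S S' : {set F}) (d : nat) (a b : F) :
  injective (fun x : F => x ^+ d) ->
  (forall mu : F, walsh n S mu = walsh n S' (mu ^+ d)) ->
  sgn_sum S' (a ^+ d) (b ^+ d) = sgn_sum S a b.
Proof.
move=> pow_inj walshSS'; have q_neq0 : (2 ^ n)%:R != 0 :> int.
  by rewrite Num.Theory.pnatr_eq0 expn_eq0.
apply: (mulfI q_neq0); rewrite -!walsh_triple_product (reindex_inj pow_inj) /=.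
by apply: eq_bigr => mu _; rewrite -!exprMn -!walshSS'.
Qed.

End WalshTripleProduct.

Section SignSumExpansion.
Variable F : finFieldType.
Implicit Types (S : {set F}) (a b c : F).

Definition ind S x : int := (x \in S)%:R.

Definition Ncomb S a b : nat :=
  #|[set xy : F * F | [&& xy.1 \in S, xy.2 \in S & a * xy.1 + b * xy.2 \in S]]|.

Lemma sgnSE S x : sgnS S x = 1 - 2 * ind S x.
Proof. by rewrite /sgnS /ind; case: (x \in S); rewrite /= ?mulr0 ?subr0 //; ring. Qed.

Lemma sum_ind S : \sum_(x : F) ind S x = #|S|%:R.
Proof. by rewrite /ind -natr_sum -big_mkcond /= sum1_card. Qed.

Lemma sum_ind_affine S a c : a != 0 -> \sum_(x : F) ind S (a * x + c) = #|S|%:R.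
Proof.
move=> a_neq0; have inj : injective (fun x => a * x + c).
  by move=> x y /addIr /(mulfI a_neq0).
by rewrite -sum_ind [RHS](reindex_inj inj).
Qed.

Lemma Ncomb_sum S a b :
  (Ncomb S a b)%:R = \sum_(x : F) \sum_(y : F) ind S x * ind S y * ind S (a * x + b * y).
Proof.
rewrite /Ncomb -sum1_card natr_sum big_mkcond pair_big /=; apply: eq_bigr => -[x y] _.
by rewrite inE /ind /=; case: (x \in S); case: (y \in S); case: (_ \in S).
Qed.

Lemma sgn_sum_Ncomb S a b : a != 0 -> b != 0 ->
  sgn_sum S a b = #|F|%:R ^+ 2 - 6 * #|F|%:R * #|S|%:R + 12 * #|S|%:R ^+ 2
                  - 8 * (Ncomb S a b)%:R.
Proof.
move=> a_neq0 b_neq0; set q : int := #|F|%:R; set k : int := #|S|%:R.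
pose Z x y := ind S (a * x + b * y).
have sum_sgn : \sum_(x : F) sgnS S x = q - 2 * k.
  under eq_bigr do rewrite sgnSE.
  by rewrite sumrB -mulr_sumr sum_ind sumr_const /q cardT -cardE.
have sumZ_y x : \sum_(y : F) Z x y = k by under eq_bigr do rewrite /Z addrC; exact: sum_ind_affine.
have sumZ_x y : \sum_(x : F) Z x y = k by exact: sum_ind_affine.
have sgn3E x y : sgnS S x * sgnS S y * sgnS S (a * x + b * y) =
    sgnS S x * sgnS S y - 2 * Z x y + 4 * (ind S x * Z x y) + 4 * (ind S y * Z x y)
    - 8 * (ind S x * ind S y * Z x y).
  by rewrite /Z !sgnSE; ring.
rewrite /sgn_sum; under eq_bigr do under eq_bigr do rewrite sgn3E.
under eq_bigr do rewrite !(big_split, sumrN) /= -!mulr_sumr.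
rewrite !(big_split, sumrN) /= -!mulr_sumr.
have -> : \sum_(x : F) \sum_(y : F) Z x y = q * k.
  by under eq_bigr do rewrite sumZ_y; rewrite sumr_const cardT -cardE mulr_natl.
have -> : \sum_(x : F) ind S x * \sum_(y : F) Z x y = k ^+ 2.
  by under eq_bigr do rewrite sumZ_y; rewrite -mulr_suml sum_ind.
have -> : \sum_(x : F) \sum_(y : F) ind S y * Z x y = k ^+ 2.
  by rewrite exchange_big; under eq_bigr do rewrite -mulr_sumr sumZ_x; rewrite -mulr_suml sum_ind.
by rewrite -Ncomb_sum -mulr_suml sum_sgn; ring.
Qed.

End SignSumExpansion.

Lemma NS_Ncomb (F : finFieldType) (S : {set F}) (a b : F) :
  NS S a b 1 = Ncomb S (- a) (- b).
Proof.
pose f (xy : F * F) := (xy, - a * xy.1 + - b * xy.2).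
have f_inj : injective f by move=> xy xy' [].
rewrite /Ncomb -(card_imset _ f_inj); apply: eq_card => -[[x y] z]; rewrite !inE /=.
apply/idP/imsetP => [/and4P [xS yS zS] | [[x' y'] + [-> -> ->]]].
  rewrite mul1r addr_eq0 => /eqP z_eq.
  have -> : z = - a * x + - b * y by rewrite !mulNr -opprD z_eq opprK.
  by exists (x, y); rewrite // inE /= xS yS !mulNr -opprD z_eq opprK zS.
by rewrite inE /= => /and3P [-> -> ->]; rewrite mul1r !mulNr addrACA !subrr addr0 eqxx.
Qed.

Lemma subset3 (T : finType) (t1 t2 t3 : T) (A : {set T}) :
  ([set t1; t2; t3] \subset A) = [&& t1 \in A, t2 \in A & t3 \in A].
Proof. by rewrite !subUset !sub1set andbA. Qed.

Lemma cards3 (T : finType) (t1 t2 t3 : T) :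
  t1 != t2 -> t2 != t3 -> t3 != t1 -> #|[set t1; t2; t3]| = 3%N.
Proof.
move=> t12 t23 t31; rewrite setUC cardsU1 cards2 !inE t12.
by rewrite (negbTE t31) eq_sym (negbTE t23).
Qed.

Lemma cards3P (T : finType) (A : {set T}) : #|A| = 3%N ->
  exists t1 t2 t3, [/\ t1 != t2, t2 != t3, t3 != t1 & A = [set t1; t2; t3]].
Proof.
move=> cardA; have /card_gt2P [t1 [t2 [t3 [[t1A t2A t3A] [t12 t23 t31]]]]] : (2 < #|A|)%N.
  by rewrite cardA.
exists t1, t2, t3; split=> //; apply/esym/eqP; rewrite eqEcard cards3 // cardA leqnn andbT.
by rewrite subset3 t1A t2A t3A.
Qed.

Lemma ratio_neq01 (F : fieldType) (t1 t2 t3 : F) :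
  t1 != t2 -> t2 != t3 -> t3 != t1 ->
  (t3 - t2) / (t1 - t2) != 0 /\ (t3 - t2) / (t1 - t2) != 1.
Proof.
rewrite -subr_eq0 => t12; rewrite eq_sym -subr_eq0 => t32 t31.
rewrite mulf_neq0 ?invr_eq0 // (can2_eq (divfK t12) (mulfK t12)) mul1r.
by split=> //; apply: contra t31 => /eqP /addIr ->.
Qed.

Section AffineDesign.
Variables (F : finFieldType) (B : {set F}).
Implicit Types (p : F * F) (t x y c : F).

Definition affine_image p : {set F} := [set p.1 * x + p.2 | x in B].
Definition affine_maps : {set F * F} := [set p : F * F | p.1 != 0].
Definition nstab : nat := #|[set p in affine_maps | affine_image p == B]|.

Definition affine_preimage p t : F := (t - p.2) / p.1.

Lemma mem_affine_image p t :
  p.1 != 0 -> (t \in affine_image p) = (affine_preimage p t \in B).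
Proof.
move=> p1_neq0; apply/imsetP/idP => [[x xB ->] | preB].
  by rewrite /affine_preimage addrK mulrC mulKf.
by exists (affine_preimage p t); rewrite // /affine_preimage mulrC divfK ?subrK.
Qed.

Lemma card_affine_fiber p0 : p0 \in affine_maps ->
  #|[set p in affine_maps | affine_image p == affine_image p0]| = nstab.
Proof.
rewrite inE => a0_neq0.
(* Composing with p0 maps the stabiliser of B onto the fiber of affine_image p0. *)
pose h p := (p0.1 * p.1, p0.1 * p.2 + p0.2).
have h_inj : injective h by move=> [a b] [a' b'] [/(mulfI a0_neq0) -> /addIr /(mulfI a0_neq0) ->].
pose tau x := p0.1 * x + p0.2.
have tau_inj : injective tau by move=> x y /addIr /(mulfI a0_neq0).
have image_h p : affine_image (h p) = tau @: affine_image p.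
  by rewrite /affine_image -imset_comp; apply: eq_imset => x /=; rewrite /tau /=; ring.
rewrite /nstab -(card_preimset _ h_inj); apply: eq_card => p; rewrite !inE /=.
by rewrite mulf_eq0 negb_or a0_neq0 image_h (inj_eq (imset_inj tau_inj)).
Qed.

Lemma nstab_gt0 : (0 < nstab)%N.
Proof.
rewrite /nstab card_gt0; apply/set0Pn; exists (1, 0); rewrite !inE /= oner_neq0 /=.
apply/eqP; rewrite /affine_image /= -[RHS](imset_id B).
by apply: eq_imset => x; rewrite mul1r addr0.
Qed.

Lemma card_affine_maps_sub (T : {set F}) :
  #|[set p in affine_maps | T \subset affine_image p]| =
  (nstab * #|[set Bl in GA1orbit B | T \subset Bl]|)%N.
Proof.
have blocksE : [set Bl in GA1orbit B | T \subset Bl] =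
               affine_image @: [set p in affine_maps | T \subset affine_image p].
  apply/setP => Bl; rewrite inE; apply/andP/imsetP => [[/imsetP [p pG ->] sub] | [p + ->]].
    by exists p; rewrite // inE pG.
  by rewrite inE => /andP [pG sub]; split; first exact: imset_f.
rewrite blocksE -sum1_card (partition_big_imset affine_image) /= mulnC -sum_nat_const.
apply: eq_bigr => _ /imsetP [p0 + ->]; rewrite inE => /andP [p0G sub].
rewrite sum1dep_card -(card_affine_fiber p0G); apply: eq_card => p; rewrite !inE.
by case: (affine_image p =P affine_image p0) => [-> | _]; rewrite ?sub ?andbT ?andbF.
Qed.

Definition comb_pairs c : {set F * F} :=
  [set xy : F * F | [&& xy.1 \in B, xy.2 \in B, xy.1 != xy.2 & c * xy.1 + (1 - c) * xy.2 \in B]].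

Definition affine_through x y t1 t2 : F * F :=
  ((t1 - t2) / (x - y), t1 - (t1 - t2) / (x - y) * x).

Lemma affine_throughP x y t1 t2 : x != y -> t1 != t2 ->
  let p := affine_through x y t1 t2 in
  [/\ p.1 != 0, affine_preimage p t1 = x & affine_preimage p t2 = y].
Proof.
rewrite -subr_eq0 => xy_neq0; rewrite -subr_eq0 => t12_neq0.
rewrite /affine_preimage /= mulf_neq0 ?invr_eq0 //.
by split=> //; field; rewrite xy_neq0 t12_neq0.
Qed.

Lemma affine_throughK p t1 t2 : p.1 != 0 -> t1 != t2 ->
  affine_through (affine_preimage p t1) (affine_preimage p t2) t1 t2 = p.
Proof.
case: p => a b /= a_neq0; rewrite -subr_eq0 => t12_neq0.
rewrite /affine_through /affine_preimage /=.
by congr pair; field; rewrite a_neq0 opprB addrA subrK t12_neq0.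
Qed.

Lemma affine_preimage_inj p : p.1 != 0 -> injective (affine_preimage p).
Proof. by move=> p1_neq0 x y /(mulIf (invr_neq0 p1_neq0)) /addIr. Qed.

Lemma affine_preimage_comb p c t1 t2 : p.1 != 0 ->
  affine_preimage p (c * t1 + (1 - c) * t2) =
  c * affine_preimage p t1 + (1 - c) * affine_preimage p t2.
Proof. by move=> p1_neq0; rewrite /affine_preimage; field. Qed.

Lemma card_affine_maps_sub3 t1 t2 t3 : t1 != t2 ->
  #|[set p in affine_maps | [set t1; t2; t3] \subset affine_image p]| =
  #|comb_pairs ((t3 - t2) / (t1 - t2))|.
Proof.
move=> t12; set c := (t3 - t2) / (t1 - t2).
have t3E : t3 = c * t1 + (1 - c) * t2 by rewrite /c; field; rewrite subr_eq0.
suff -> : [set p in affine_maps | [set t1; t2; t3] \subset affine_image p] =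
          [set affine_through xy.1 xy.2 t1 t2 | xy in comb_pairs c].
  rewrite card_in_imset // => -[x y] [x' y']; rewrite !inE /=.
  move=> /and4P [_ _ xy _] /and4P [_ _ xy' _] eq_p.
  have [_ e1 e2] := affine_throughP xy t12; have [_ e1' e2'] := affine_throughP xy' t12.
  by congr pair; [rewrite -e1 eq_p e1' | rewrite -e2 eq_p e2'].
apply/setP => p; rewrite inE subset3; apply/idP/imsetP.
  case/andP; rewrite inE => p1_neq0; rewrite !mem_affine_image // => /and3P [x1B x2B x3B].
  exists (affine_preimage p t1, affine_preimage p t2); last by rewrite affine_throughK.
  rewrite inE /= x1B x2B (inj_eq (affine_preimage_inj p1_neq0)) t12.
  by rewrite -affine_preimage_comb // -t3E.
case=> -[x y]; rewrite inE /= => /and4P [xB yB xy cB] ->.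
have [a_neq0 preim1 preim2] := affine_throughP xy t12.
by rewrite inE a_neq0 !mem_affine_image // t3E affine_preimage_comb // preim1 preim2 xB yB.
Qed.

Lemma card_comb_pairs_blocks t1 t2 t3 : t1 != t2 ->
  #|comb_pairs ((t3 - t2) / (t1 - t2))| =
  (nstab * #|[set Bl in GA1orbit B | [set t1; t2; t3] \subset Bl]|)%N.
Proof. by move=> t12; rewrite -card_affine_maps_sub3 // card_affine_maps_sub. Qed.

Lemma design_iff_comb_pairs :
  is_3design (GA1orbit B) <-> indep_u (fun c => #|comb_pairs c|).
Proof.
split=> [[lambda design] u v u0 u1 v0 v1 | indep].
  have comb_pairsE w : w != 0 -> w != 1 -> #|comb_pairs w| = (nstab * lambda)%N.
    move=> w0 w1; have := card_comb_pairs_blocks w (oner_neq0 F).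
    by rewrite !subr0 divr1 => ->; rewrite design // cards3 ?oner_neq0 // eq_sym.
  by rewrite !comb_pairsE.
(* Such a [c0] exists as soon as some 3-subset of [F] does. *)
pose c0 := odflt 0 [pick c : F | (c != 0) && (c != 1)].
exists (#|comb_pairs c0| %/ nstab)%N => T /cards3P [t1 [t2 [t3 [t12 t23 t31 ->]]]].
have [c_neq0 c_neq1] := ratio_neq01 t12 t23 t31.
have [c00 c01] : c0 != 0 /\ c0 != 1.
  rewrite /c0; case: pickP => [c /andP [] // | /(_ ((t3 - t2) / (t1 - t2)))].
  by rewrite c_neq0 c_neq1.
by rewrite -(indep _ _ c_neq0 c_neq1 c00 c01) card_comb_pairs_blocks // mulKn ?nstab_gt0.
Qed.

Lemma card_comb_pairs c : (#|comb_pairs c| + #|B|)%N = Ncomb B c (1 - c).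
Proof.
rewrite /Ncomb -(cardsID [set xy : F * F | xy.1 == xy.2]) addnC; congr (_ + _)%N.
  have diag_inj : injective (fun x : F => (x, x)) by move=> x y [].
  rewrite -(card_imset _ diag_inj); apply: eq_card => -[x y]; rewrite !inE /=.
  apply/imsetP/andP => [[z zB [-> ->]] | [/and3P [xB _ _] /eqP <-]]; last by exists x.
  by rewrite -mulrDl addrC subrK mul1r zB.
by apply: eq_card => -[x y]; rewrite !inE /=; case: (x == y); rewrite ?andbF.
Qed.

End AffineDesign.

Lemma indep_u_inj (F : finFieldType) (T1 T2 : Type) (g1 : F -> T1) (g2 : F -> T2)
    (h : T2 -> T1) :
  injective h -> (forall u, u != 0 -> u != 1 -> g1 u = h (g2 u)) ->
  indep_u g1 <-> indep_u g2.
Proof.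
move=> h_inj g12; split=> indep u v u0 u1 v0 v1; last by rewrite !g12 // (indep u v).
by apply: h_inj; rewrite -!g12 //; apply: indep.
Qed.

Lemma subr_mul8_natr_inj (c : int) : injective (fun m : nat => c - 8 * m%:R).
Proof.
move=> m m' /addrI /oppr_inj /(mulfI (_ : 8 != 0 :> int)) eq_m.
by apply/eqP; rewrite -(Num.Theory.eqr_nat int) eq_m.
Qed.

Lemma add1r_eq0_pchar2 (R : nzRingType) (u : R) :
  2%N \in [pchar R] -> (1 + u == 0) = (u == 1).
Proof. by move=> hchar; rewrite addr_eq0 (oppr_pchar2 hchar) eq_sym. Qed.

Lemma design_iff_sgn_sum (F : finFieldType) (B : {set F}) : 2%N \in [pchar F] ->
  is_3design (GA1orbit B) <-> indep_u (fun u => sgn_sum B u (1 + u)).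
Proof.
move=> hchar; rewrite design_iff_comb_pairs; apply: iff_sym.
apply: (indep_u_inj (inj_comp (@subr_mul8_natr_inj _) (@addIn #|B|))) => u u0 u1 /=.
by rewrite sgn_sum_Ncomb ?(add1r_eq0_pchar2 _ hchar) // card_comb_pairs (oppr_pchar2 hchar).
Qed.

Lemma expf_1_add_mul_card_pred (F : finFieldType) (x : F) a : x ^+ (1 + a * #|F|.-1) = x.
Proof.
elim: a => [|a IH]; first by rewrite mul0n addn0 expr1.
rewrite mulSn addnCA exprD IH -exprSr prednK ?expf_card //.
by apply/card_gt0P; exists 0.
Qed.

Lemma expf_inj (F : finFieldType) d : (2 < #|F|)%N -> coprime d #|F|.-1 ->
  injective (fun x : F => x ^+ d).
Proof.
case: d => [|d] F_gt2; first by rewrite /coprime gcd0n; case: #|F| F_gt2 => [|[|[]]].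
case: (Bezoutl #|F|.-1 (ltn0Sn d)) => a _ /[swap] /eqP -> /dvdnP [e de] x y /= xy.
by rewrite -(expf_1_add_mul_card_pred x a) -(expf_1_add_mul_card_pred y a) de mulnC !exprM xy.
Qed.

Theorem theorem8 (n : nat) (F : finFieldType) (hchar : 2%N \in [pchar F])
  (hcard : #|F| = (2 ^ n)%N) (k : nat) (B E : {set F}) (d : nat)
  (hB : #|B| = k) (hk : (3 <= k)%N)
  (hd : coprime d (2 ^ n).-1)
  (hWE : forall mu : F, walsh n B mu = walsh n E (mu ^+ d)) :
  [<-> is_3design (GA1orbit B);
       indep_u (fun u : F => \sum_(x : F) \sum_(y : F)
                  sgnS E x * sgnS E y * sgnS E (u ^+ d * x + (1 + u) ^+ d * y));
       indep_u (fun u : F => \sum_(alpha : F)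
                  walsh n E alpha * walsh n E (u ^+ d * alpha)
                    * walsh n E ((1 + u) ^+ d * alpha));
       indep_u (fun u : F => NS E (u ^+ d) ((1 + u) ^+ d) 1)].
Proof.
have F_gt2 : (2 < #|F|)%N by rewrite (leq_trans hk) // -hB max_card.
have pow_inj : injective (fun x : F => x ^+ d) by apply: expf_inj F_gt2 _; rewrite hcard.
pose P u := sgn_sum B u (1 + u).
have PE (u : F) : sgn_sum E (u ^+ d) ((1 + u) ^+ d) = P u.
  exact: (sgn_sum_expf hchar hcard _ _ pow_inj hWE).
have design_P : is_3design (GA1orbit B) <-> indep_u P := design_iff_sgn_sum B hchar.
have sgn_sum_P : indep_u (fun u => sgn_sum E (u ^+ d) ((1 + u) ^+ d)) <-> indep_u P.
  by apply: (@indep_u_inj _ _ _ _ _ id) => // u _ _; apply: PE.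
have walsh_P : indep_u (fun u : F => \sum_(alpha : F) walsh n E alpha
    * walsh n E (u ^+ d * alpha) * walsh n E ((1 + u) ^+ d * alpha)) <-> indep_u P.
  have q_neq0 : (2 ^ n)%:R != 0 :> int by rewrite Num.Theory.pnatr_eq0 expn_eq0.
  apply: (indep_u_inj (mulfI q_neq0)) => u _ _.
  by rewrite (walsh_triple_product hchar hcard) PE.
have NS_P : indep_u (fun u : F => NS E (u ^+ d) ((1 + u) ^+ d) 1) <-> indep_u P.
  apply: iff_sym; apply: (indep_u_inj (@subr_mul8_natr_inj _)) => u u0 u1.
  rewrite -PE sgn_sum_Ncomb ?expf_neq0 ?(add1r_eq0_pchar2 _ hchar) //.
  by rewrite NS_Ncomb !(oppr_pchar2 hchar).
tfae.
- by move/design_P/sgn_sum_P.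
- by move/sgn_sum_P/walsh_P.
- by move/walsh_P/NS_P.
- by move/NS_P/design_P.
Qed.
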